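(* Let $(A,\to,1)$ be an algebra of type $(2,0)$ satisfying (Re), (M), (B) and (An). Then $(A,\to,1)$ satisfies (Ex) if and only if it satisfies (BB).
   Context: Properties, required for all $x,y,z\in A$: (Re) $x\to x=1$; (M) $1\to x=x$; (B) $(y\to z)\to((x\to y)\to(x\to z))=1$; (An) $x\to y=1$ and $y\to x=1$ imply $x=y$; (Ex) $x\to(y\to z)=y\to(x\to z)$; (BB) $(y\to z)\to((z\to x)\to(y\to x))=1$. *)

Definition prop_Re {A : Type} (imp : A -> A -> A) (one : A) : Prop :=
  forall x : A, imp x x = one.

Definition prop_M {A : Type} (imp : A -> A -> A) (one : A) : Prop :=
  forall x : A, imp one x = x.

Definition prop_B {A : Type} (imp : A -> A -> A) (one : A) : Prop :=
  forall x y z : A, imp (imp y z) (imp (imp x y) (imp x z)) = one.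

Definition prop_An {A : Type} (imp : A -> A -> A) (one : A) : Prop :=
  forall x y : A, imp x y = one -> imp y x = one -> x = y.

Definition prop_Ex {A : Type} (imp : A -> A -> A) : Prop :=
  forall x y z : A, imp x (imp y z) = imp y (imp x z).

Definition prop_BB {A : Type} (imp : A -> A -> A) (one : A) : Prop :=
  forall x y z : A, imp (imp y z) (imp (imp z x) (imp y x)) = one.

(* Write [a <= b] for [a -> b = 1].  Under (Ex), (BB) is (B) with its two
   antecedents exchanged.  Conversely, (BB) makes [->] antitone in its first
   argument, and its instance [y := 1] reads [z <= (z -> x) -> x].  So
   [x -> (y -> z) <= ((y -> z) -> z) -> (x -> z)] by (BB), and antitonicity
   applied to [y <= (y -> z) -> z] bounds this by [y -> (x -> z)]; the chain
   closes by transitivity, a consequence of (B) and (M).  The inequality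
   holds in both directions, so (An) yields (Ex). *)


Section ImplicationAlgebra.

Variables (A : Type) (imp : A -> A -> A) (one : A).
Hypothesis hM : prop_M imp one.
Hypothesis hB : prop_B imp one.

Lemma imp_trans (x y z : A) :
  imp x y = one -> imp y z = one -> imp x z = one.
Proof.
  intros hxy hyz.
  pose proof (hB x y z) as h.
  now rewrite hyz, hM, hxy, hM in h.
Qed.

Lemma BB_of_Ex : prop_Ex imp -> prop_BB imp one.
Proof.
  intros hEx x y z.
  rewrite hEx.
  apply hB.
Qed.

Section FromBB.

Hypothesis hBB : prop_BB imp one.

Lemma imp_antitone (x y z : A) :
  imp x y = one -> imp (imp y z) (imp x z) = one.
Proof.
  intros hxy.
  pose proof (hBB z x y) as h.
  now rewrite hxy, hM in h.
Qed.

Lemma imp_modus_ponens (x z : A) : imp z (imp (imp z x) x) = one.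
Proof.
  pose proof (hBB x one z) as h.
  now rewrite !hM in h.
Qed.

Lemma imp_exchange_le (x y z : A) :
  imp (imp x (imp y z)) (imp y (imp x z)) = one.
Proof.
  apply imp_trans with (y := imp (imp (imp y z) z) (imp x z)).
  - apply (hBB z x (imp y z)).
  - apply imp_antitone, imp_modus_ponens.
Qed.

End FromBB.

End ImplicationAlgebra.

Theorem theorem2p4 (A : Type) (imp : A -> A -> A) (one : A)
  (hRe : prop_Re imp one) (hM : prop_M imp one)
  (hB : prop_B imp one) (hAn : prop_An imp one) :
  prop_Ex imp <-> prop_BB imp one.
Proof.
  split.
  - exact (BB_of_Ex _ _ _ hB).
  - intros hBB x y z.
    apply hAn; apply (imp_exchange_le _ _ _ hM hB hBB).
Qed.
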